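(* Let $\mathrm{dot}(\mathbf{x},\mathbf{y})=\langle\mathbf{x},\mathbf{y}\rangle$ for $\mathbf{x},\mathbf{y}\in\mathbb{R}^n$, with graph $\{(\mathbf{x},\mathbf{y},\langle\mathbf{x},\mathbf{y}\rangle)\}\subseteq\mathbb{R}^n\times\mathbb{R}^n\times\mathbb{R}$. Let $(\mathbf{x}_0,\mathbf{y}_0,z_0)\in\mathbb{R}^n\times\mathbb{R}^n\times\mathbb{R}$ with $\mathbf{x}_0\ne\mathbf{y}_0$ and $\mathbf{x}_0\ne-\mathbf{y}_0$, and put $p=\langle\mathbf{x}_0,\mathbf{y}_0\rangle$, $q=\|\mathbf{x}_0\|^2+\|\mathbf{y}_0\|^2$. Then the function $f(\lambda)=\frac{(1+\lambda^2)p+\lambda q}{(1-\lambda^2)^2}-z_0+\lambda$ has a unique root $\lambda$ in $(-1,1)$, the Euclidean projection of $(\mathbf{x}_0,\mathbf{y}_0,z_0)$ onto the graph of $\mathrm{dot}$ is unique, and it equals $(\mathbf{x}(\lambda),\mathbf{y}(\lambda),z_0-\lambda)$ where $\mathbf{x}(\lambda)=\frac{\mathbf{x}_0+\lambda\mathbf{y}_0}{1-\lambda^2}$ and $\mathbf{y}(\lambda)=\frac{\mathbf{y}_0+\lambda\mathbf{x}_0}{1-\lambda^2}$. *)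

From HB Require Import structures.
From mathcomp Require Import all_boot all_order all_algebra.
From mathcomp Require Import reals.
Set Implicit Arguments. Unset Strict Implicit. Unset Printing Implicit Defensive.
Import Order.TTheory GRing.Theory Num.Theory.
Local Open Scope ring_scope.

Definition dot (R : realType) (n : nat) (x y : 'rV[R]_n) : R :=
  \sum_(i < n) x 0 i * y 0 i.

Definition sqnorm (R : realType) (n : nat) (x : 'rV[R]_n) : R := dot x x.

Definition sqdist3 (R : realType) (n : nat) (x y : 'rV[R]_n) (z : R)
  (x0 y0 : 'rV[R]_n) (z0 : R) : R :=
  sqnorm (x - x0) + sqnorm (y - y0) + (z - z0) ^+ 2.

Definition in_dot_graph (R : realType) (n : nat) (x y : 'rV[R]_n) (z : R) : Prop :=
  z = dot x y.

Definition is_proj_dot_graph (R : realType) (n : nat) (x0 y0 : 'rV[R]_n) (z0 : R)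
  (x y : 'rV[R]_n) (z : R) : Prop :=
  in_dot_graph x y z /\
  forall (x' y' : 'rV[R]_n) (z' : R), in_dot_graph x' y' z' ->
    sqdist3 x y z x0 y0 z0 <= sqdist3 x' y' z' x0 y0 z0.

Definition f_root (R : realType) (n : nat) (x0 y0 : 'rV[R]_n) (z0 l : R) : R :=
  ((1 + l ^+ 2) * dot x0 y0 + l * (sqnorm x0 + sqnorm y0)) / (1 - l ^+ 2) ^+ 2
  - z0 + l.

Definition x_of (R : realType) (n : nat) (x0 y0 : 'rV[R]_n) (l : R) : 'rV[R]_n :=
  (1 - l ^+ 2)^-1 *: (x0 + l *: y0).

Definition y_of (R : realType) (n : nat) (x0 y0 : 'rV[R]_n) (l : R) : 'rV[R]_n :=
  (1 - l ^+ 2)^-1 *: (y0 + l *: x0).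

(* Fix l in (-1,1) with f(l) = 0 and put X := x(l), Y := y(l).  Then
   X - x0 = l Y, Y - y0 = l X and <X,Y> = z0 - l, and expanding the squared
   distance from (x0,y0,z0) to a graph point (X+u, Y+v, <X+u,Y+v>) gives
     d(X,Y,z0-l) + (<u,Y> + <X,v> + <u,v>)^2 + ||u - l v||^2 + (1-l^2)||v||^2,
   so (X, Y, z0 - l) is the unique nearest point.  A root l exists by the
   intermediate value theorem applied to (1-l^2)^2 f(l), which equals
   -||x0-y0||^2 < 0 at l = -1 and ||x0+y0||^2 > 0 at l = 1; it is unique because
   two roots yield the same nearest point, hence the same z0 - l. *)
From HB Require Import structures.
From mathcomp Require Import all_boot all_order all_algebra.
From mathcomp Require Import reals.
From mathcomp Require Import ring lra.
From mathcomp Require Import polyrcf.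
Import Order.TTheory GRing.Theory Num.Theory.
Local Open Scope ring_scope.
Set Implicit Arguments. Unset Strict Implicit.

Section InnerProduct.
Variables (R : realType) (n : nat).
Implicit Types (x y z : 'rV[R]_n) (a : R).

Lemma dotC x y : dot x y = dot y x.
Proof. by apply: eq_bigr => i _; rewrite mulrC. Qed.

Lemma dotDl x y z : dot (x + y) z = dot x z + dot y z.
Proof. by rewrite /dot -big_split; apply: eq_bigr => i _; rewrite mxE mulrDl. Qed.

Lemma dotDr x y z : dot z (x + y) = dot z x + dot z y.
Proof. by rewrite !(dotC z) dotDl. Qed.

Lemma dotZl a x y : dot (a *: x) y = a * dot x y.
Proof. by rewrite /dot mulr_sumr; apply: eq_bigr => i _; rewrite mxE mulrA. Qed.

Lemma dotZr a x y : dot y (a *: x) = a * dot y x.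
Proof. by rewrite !(dotC y) dotZl. Qed.

Lemma dotNl x y : dot (- x) y = - dot x y.
Proof. by rewrite -scaleN1r dotZl mulN1r. Qed.

Lemma dotNr x y : dot y (- x) = - dot y x.
Proof. by rewrite !(dotC y) dotNl. Qed.

Definition dotE := (dotDl, dotDr, dotZl, dotZr, dotNl, dotNr).

Lemma sqnormD x y : sqnorm (x + y) = sqnorm x + sqnorm y + 2 * dot x y.
Proof. by rewrite /sqnorm !dotE (dotC y x); ring. Qed.

Lemma sqnormB x y : sqnorm (x - y) = sqnorm x + sqnorm y - 2 * dot x y.
Proof. by rewrite /sqnorm !dotE (dotC y x); ring. Qed.

Lemma sqnorm_ge0 x : 0 <= sqnorm x.
Proof. by apply: sumr_ge0 => i _; rewrite -expr2 sqr_ge0. Qed.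

Lemma sqnorm_eq0 x : (sqnorm x == 0) = (x == 0).
Proof.
apply/eqP/eqP => [|->]; last by rewrite /sqnorm /dot big1 // => i _; rewrite mxE mul0r.
move/psumr_eq0P => x2_eq0; apply/rowP => i; rewrite mxE.
apply/eqP; rewrite -sqrf_eq0 expr2; apply/eqP/x2_eq0 => // j _.
by rewrite -expr2 sqr_ge0.
Qed.

Lemma sqnorm_gt0 x : (0 < sqnorm x) = (x != 0).
Proof. by rewrite lt_neqAle sqnorm_ge0 andbT eq_sym sqnorm_eq0. Qed.

Lemma one_sub_sqr_gt0 a : -1 < a < 1 -> 0 < 1 - a ^+ 2.
Proof. by move=> /andP[? ?]; nra. Qed.

Lemma sqnormB_scale a x y :
  sqnorm x + sqnorm y - 2 * a * dot x y = sqnorm (x - a *: y) + (1 - a ^+ 2) * sqnorm y.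
Proof. by rewrite sqnormB /sqnorm !dotE; ring. Qed.

Lemma coupled_form_ge0 a x y : -1 < a < 1 ->
  0 <= sqnorm x + sqnorm y - 2 * a * dot x y.
Proof.
move=> /one_sub_sqr_gt0/ltW d_ge0.
by rewrite sqnormB_scale; apply: addr_ge0; [|apply: mulr_ge0]; rewrite ?sqnorm_ge0.
Qed.

Lemma coupled_form_eq0 a x y : -1 < a < 1 ->
  sqnorm x + sqnorm y - 2 * a * dot x y = 0 -> x = 0 /\ y = 0.
Proof.
move=> /one_sub_sqr_gt0 d_gt0; rewrite sqnormB_scale => form0.
have ge0_xy := sqnorm_ge0 (x - a *: y); have ge0_y := sqnorm_ge0 y.
have ge0_dy := mulr_ge0 (ltW d_gt0) ge0_y.
have /eqP : (1 - a ^+ 2) * sqnorm y = 0 by lra.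
rewrite mulf_eq0 gt_eqF //= sqnorm_eq0 => /eqP y0.
have /eqP : sqnorm (x - a *: y) = 0 by lra.
by rewrite sqnorm_eq0 y0 scaler0 subr0 => /eqP.
Qed.

End InnerProduct.

Section NearestPoint.
Variables (R : realType) (n : nat) (x0 y0 : 'rV[R]_n) (z0 : R).

(* The first-order optimality conditions for the nearest point, with Lagrange
   multiplier l for the constraint z = <x,y>. *)
Definition critical_point (l : R) (X Y : 'rV[R]_n) :=
  [/\ X - x0 = l *: Y, Y - y0 = l *: X & dot X Y = z0 - l].

Lemma sqdist3_critical l X Y u v : critical_point l X Y ->
  sqdist3 (X + u) (Y + v) (dot (X + u) (Y + v)) x0 y0 z0 =
  sqdist3 X Y (z0 - l) x0 y0 z0 + (dot u Y + dot X v + dot u v) ^+ 2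
  + (sqnorm u + sqnorm v - 2 * l * dot u v).
Proof.
case=> dX dY dXY; rewrite /sqdist3.
have -> : X + u - x0 = l *: Y + u by rewrite addrAC dX.
have -> : Y + v - y0 = l *: X + v by rewrite addrAC dY.
rewrite dX dY /sqnorm !dotE dXY (dotC Y u) (dotC v X); ring.
Qed.

Lemma critical_point_nearest l X Y : -1 < l < 1 -> critical_point l X Y ->
  forall x y z, is_proj_dot_graph x0 y0 z0 x y z <-> (x = X /\ y = Y /\ z = z0 - l).
Proof.
move=> l_in crit; have [_ _ dXY] := crit.
have dist_ge u v : sqdist3 X Y (z0 - l) x0 y0 z0
    + (sqnorm u + sqnorm v - 2 * l * dot u v)
    <= sqdist3 (X + u) (Y + v) (dot (X + u) (Y + v)) x0 y0 z0.
  rewrite (sqdist3_critical u v crit).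
  by have := sqr_ge0 (dot u Y + dot X v + dot u v); lra.
move=> x y z; split.
- case=> -> nearest; have := nearest X Y (z0 - l) (esym dXY).
  have -> : x = X + (x - X) by rewrite addrC subrK.
  have -> : y = Y + (y - Y) by rewrite addrC subrK.
  move: (dist_ge (x - X) (y - Y)) (coupled_form_ge0 (x - X) (y - Y) l_in).
  set u := x - X; set v := y - Y => lower form_ge0 minimal.
  have [u0 v0] : u = 0 /\ v = 0 by apply: (coupled_form_eq0 l_in); lra.
  by rewrite u0 v0 !addr0 dXY; split.
- case=> -> [-> ->]; split=> [|x' y' _ ->]; first by rewrite /in_dot_graph dXY.
  have -> : x' = X + (x' - X) by rewrite addrC subrK.
  have -> : y' = Y + (y' - Y) by rewrite addrC subrK.
  have := coupled_form_ge0 (x' - X) (y' - Y) l_in.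
  have := dist_ge (x' - X) (y' - Y); lra.
Qed.

Lemma f_root_critical l : -1 < l < 1 -> f_root x0 y0 z0 l = 0 ->
  critical_point l (x_of x0 y0 l) (y_of x0 y0 l).
Proof.
move=> /one_sub_sqr_gt0/gt_eqF/negbT d_neq0; rewrite /f_root /sqnorm => f0.
split; try by apply/rowP => i; rewrite !mxE; field.
rewrite /x_of /y_of !dotE (dotC y0 x0).
set N := (1 + l ^+ 2) * dot x0 y0 + _ in f0.
have -> : z0 - l = N / (1 - l ^+ 2) ^+ 2 by lra.
by rewrite /N; field.
Qed.

Lemma nearest_f_root l : -1 < l < 1 -> f_root x0 y0 z0 l = 0 ->
  forall x y z, is_proj_dot_graph x0 y0 z0 x y z <->
  (x = x_of x0 y0 l /\ y = y_of x0 y0 l /\ z = z0 - l).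
Proof. by move=> l_in f0; apply: critical_point_nearest (f_root_critical l_in f0). Qed.

Definition f_root_numer : {poly R} :=
  (1 + 'X^2) * (dot x0 y0)%:P + 'X * (sqnorm x0 + sqnorm y0)%:P
  + ('X - z0%:P) * (1 - 'X^2) * (1 - 'X^2).

Lemma f_root_numerE l : -1 < l < 1 ->
  f_root_numer.[l] = f_root x0 y0 z0 l * (1 - l ^+ 2) ^+ 2.
Proof.
move=> /one_sub_sqr_gt0/gt_eqF/negbT d_neq0.
by rewrite /f_root_numer /f_root !hornerE /=; field.
Qed.

Lemma f_root_exists : x0 != y0 -> x0 != - y0 ->
  exists2 l, -1 < l < 1 & f_root x0 y0 z0 l = 0.
Proof.
move=> neq neqN.
have := sqnorm_gt0 (x0 - y0); rewrite subr_eq0 neq sqnormB => gt0_m.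
have := sqnorm_gt0 (x0 + y0); rewrite -[y0]opprK subr_eq0 neqN opprK sqnormD => gt0_p.
have [l] : {l | l \in `]-1, 1[ & root f_root_numer l}.
  apply: poly_ivtoo; first by lra.
  rewrite /f_root_numer !hornerE sqrrN expr1n subrr !mulr0 !addr0 /=; nra.
rewrite in_itv /= => l_in /rootP; rewrite f_root_numerE // => /eqP.
rewrite mulf_eq0 expf_eq0 (gt_eqF (one_sub_sqr_gt0 l_in)) andbF orbF => /eqP f0.
by exists l.
Qed.

End NearestPoint.

Theorem mainTheorem6 (R : realType) (n : nat) (x0 y0 : 'rV[R]_n) (z0 : R)
  (hxy : x0 != y0) (hxny : x0 != - y0) :
  (exists! l : R, -1 < l < 1 /\ f_root x0 y0 z0 l = 0) /\
  (forall l : R, -1 < l < 1 -> f_root x0 y0 z0 l = 0 ->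
     forall (x y : 'rV[R]_n) (z : R),
       is_proj_dot_graph x0 y0 z0 x y z <->
       (x = x_of x0 y0 l /\ y = y_of x0 y0 l /\ z = z0 - l)).
Proof.
split; last exact: nearest_f_root.
have [l l_in f0] := f_root_exists z0 hxy hxny.
exists l; split=> // l' [l'_in f0'].
have [_ [_ same_z]] := proj1 (nearest_f_root l'_in f0' _ _ _)
  (proj2 (nearest_f_root l_in f0 _ _ _) (conj erefl (conj erefl erefl))).
by apply: oppr_inj; apply: (addrI z0).
Qed.
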